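(* Let $(X_m)_{m\in\mathbb Z}$ be a homogeneous second order recurrence sequence with constant coefficients. For integers $a,b,c,d,e$ put $$\Delta=X_{d-a}X_{e-b}-X_{e-a}X_{d-b},\quad \Delta_1=X_{d-c}X_{e-b}-X_{e-c}X_{d-b},\quad \Delta_2=X_{d-a}X_{e-c}-X_{e-a}X_{d-c},$$ and suppose $\Delta_1\neq0$ and $\Delta_2\neq0$. Then for every nonnegative integer $k$ and every integer $m$: $$\sum_{r=0}^k\binom kr\left(\frac{\Delta_1}{\Delta_2}\right)^rX_{m-(b-c)k+(b-a)r}=\left(\frac{\Delta}{\Delta_2}\right)^kX_m,$$ $$\sum_{r=0}^k\binom kr\left(\frac{-\Delta}{\Delta_2}\right)^rX_{m+(a-b)k+(b-c)r}=\left(\frac{\Delta_1}{-\Delta_2}\right)^kX_m,$$ $$\sum_{r=0}^k\binom kr\left(\frac{-\Delta}{\Delta_1}\right)^rX_{m+(b-a)k+(a-c)r}=\left(\frac{\Delta_2}{-\Delta_1}\right)^kX_m.$$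
   Context: A homogeneous second order recurrence sequence with constant coefficients is a sequence $(X_m)_{m\in\mathbb Z}$ of complex numbers for which there are constants $p,q\in\mathbb C$, $q\neq 0$, with $X_m=pX_{m-1}+qX_{m-2}$ for all $m\in\mathbb Z$. Here $0^0=1$. *)

From HB Require Import structures.
From mathcomp Require Import all_boot all_order all_algebra.
Set Implicit Arguments. Unset Strict Implicit. Unset Printing Implicit Defensive.
Import Order.TTheory GRing.Theory Num.Theory.
Local Open Scope ring_scope.

Definition second_order_rec (R : pzRingType) (X : int -> R) : Prop :=
  exists p q : R, q != 0 /\ forall m : int, X m = p * X (m - 1) + q * X (m - 2).

From HB Require Import structures.
From mathcomp Require Import all_boot all_order all_algebra ring.
Import Order.TTheory GRing.Theory Num.Theory.
Set Implicit Arguments. Unset Strict Implicit. Unset Printing Implicit Defensive.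
Local Open Scope ring_scope.

(* Shifts of a solution are again solutions, and the solutions form a module
   of rank 2 (a solution is determined by its values at 0 and 1).  Hence the
   3x3 determinant of three solutions evaluated at three indices vanishes,
   which, for the shifts X(. - a), X(. - b), X(. - c), is the linear relation
   D1 X(n - a) + D2 X(n - b) = D X(n - c).  Dividing it by D2 (resp. D1)
   expresses g X_j as X_(j+s) + beta X_(j+s+u) for suitable g, beta, s, u, and
   iterating this k times with Pascal's rule gives the binomial sums. *)

Section Recurrence.
Variables (R : idomainType) (p q : R).

Definition rec_sol (Y : int -> R) :=
  forall m : int, Y m = p * Y (m - 1) + q * Y (m - 2).

Lemma rec_sol_shift (Y : int -> R) (t : int) :
  rec_sol Y -> rec_sol (fun n => Y (n - t)).
Proof.
move=> HY m; rewrite HY.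
have -> : m - t - 1 = m - 1 - t by ring.
by have -> : m - t - 2 = m - 2 - t by ring.
Qed.

Hypothesis q_neq0 : q != 0.

Lemma rec_sol_eq0 (Y : int -> R) :
  rec_sol Y -> Y 0 = 0 -> Y 1 = 0 -> forall m, Y m = 0.
Proof.
move=> HY Y0 Y1.
have up (n : nat) : Y n%:Z = 0 /\ Y (n%:Z + 1) = 0.
  elim: n => [|n [IH0 IH1]]; first by rewrite Y0 add0r Y1.
  split; first by rewrite intS addrC.
  rewrite HY; have -> : n.+1%:Z + 1 - 1 = n%:Z + 1 by rewrite intS; ring.
  have -> : n.+1%:Z + 1 - 2 = n%:Z by rewrite intS; ring.
  by rewrite IH0 IH1 !mulr0 addr0.
(* Running the recurrence backwards divides by q. *)
have down (n : nat) : Y (- n%:Z) = 0 /\ Y (1 - n%:Z) = 0.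
  elim: n => [|n [IH0 IH1]]; first by rewrite oppr0 Y0 subr0 Y1.
  split; last by rewrite intS opprD addrA subrr add0r.
  have := HY (1 - n%:Z).
  have -> : 1 - n%:Z - 1 = - n%:Z by ring.
  have -> : 1 - n%:Z - 2 = - n.+1%:Z by rewrite intS; ring.
  rewrite IH0 IH1 mulr0 add0r => /esym/eqP.
  by rewrite mulf_eq0 (negPf q_neq0) => /eqP.
by case=> n; [case: (up n) | rewrite NegzE; case: (down n.+1)].
Qed.

Variables (Y W Z : int -> R).
Hypotheses (HY : rec_sol Y) (HW : rec_sol W) (HZ : rec_sol Z).

Definition det3 (n d e : int) :=
  Y n * (W d * Z e - W e * Z d) - W n * (Y d * Z e - Y e * Z d)
  + Z n * (Y d * W e - Y e * W d).

Lemma det3_cycle n d e : det3 n d e = det3 d e n.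
Proof. by rewrite /det3; ring. Qed.

Lemma rec_sol_det3 d e : rec_sol (fun n => det3 n d e).
Proof. by move=> m; rewrite /det3 (HY m) (HW m) (HZ m); ring. Qed.

Lemma det3_eq0 n d e : det3 n d e = 0.
Proof.
pose bit (x : int) := (x == 0) || (x == 1).
have extend d' e' : det3 0 d' e' = 0 -> det3 1 d' e' = 0 ->
    forall n', det3 n' d' e' = 0.
  exact: rec_sol_eq0 (rec_sol_det3 d' e').
(* Among three indices in {0, 1} two coincide: two equal columns. *)
have bits n' d' e' : bit d' -> bit e' -> det3 n' d' e' = 0.
  by move=> /orP[]/eqP-> /orP[]/eqP->; apply: extend; rewrite /det3; ring.
have bit_last n' d' e' : bit e' -> det3 n' d' e' = 0.
  move=> be; rewrite det3_cycle; apply: extend; rewrite -det3_cycle;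
    by apply: bits; rewrite /bit ?eqxx ?orbT.
rewrite det3_cycle det3_cycle; apply: extend;
  by rewrite det3_cycle; apply: bit_last; rewrite /bit ?eqxx ?orbT.
Qed.

End Recurrence.

Lemma rec_sol_shift_relation (R : idomainType) (p q : R) (X : int -> R) :
  q != 0 -> rec_sol p q X -> forall a b c d e n : int,
  (X (d - c) * X (e - b) - X (e - c) * X (d - b)) * X (n - a)
  + (X (d - a) * X (e - c) - X (e - a) * X (d - c)) * X (n - b)
  = (X (d - a) * X (e - b) - X (e - a) * X (d - b)) * X (n - c).
Proof.
move=> q_neq0 HX a b c d e n; apply/eqP; rewrite -subr_eq0 -oppr_eq0; apply/eqP.
have := det3_eq0 q_neq0 (rec_sol_shift a HX) (rec_sol_shift b HX)
    (rec_sol_shift c HX) n d e.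
by rewrite /det3 => <-; ring.
Qed.

Lemma sum_binomialS (V : nmodType) (F : nat -> V) (k : nat) :
  \sum_(0 <= r < k.+2) F r *+ 'C(k.+1, r)
  = \sum_(0 <= r < k.+1) F r *+ 'C(k, r) + \sum_(0 <= r < k.+1) F r.+1 *+ 'C(k, r).
Proof.
rewrite big_nat_recl // [in RHS]big_nat_recl // !bin0 -addrA; congr (_ + _).
under eq_bigr do rewrite binS mulrnDr.
by rewrite big_split /= big_nat_recr //= bin_small // mulr0n addr0.
Qed.

Lemma binomial_shift_sum (R : comPzRingType) (X : int -> R) (g beta : R)
    (t0 t1 t2 : int) :
  (forall n, g * X (n - t0) = X (n - t1) + beta * X (n - t2)) ->
  forall (k : nat) (m : int),
  \sum_(0 <= r < k.+1) 'C(k, r)%:R * beta ^+ r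
     * X (m + (t0 - t1) * k%:Z + (t1 - t2) * r%:Z)
  = g ^+ k * X m.
Proof.
set s := t0 - t1; set u := t1 - t2 => HX.
have step j : g * X j = X (j + s) + beta * X (j + s + u).
  have := HX (j + t0); rewrite addrK /s /u.
  have -> : j + t0 - t1 = j + (t0 - t1) by ring.
  by have -> : j + t0 - t2 = j + (t0 - t1) + (t1 - t2) by ring.
move=> k m; under eq_bigr do rewrite -mulrA mulr_natl.
elim: k m => [|k IH] m; first by rewrite big_nat1 bin0 expr0 !mulr0 !addr0 !mul1r.
rewrite exprSr -mulrA step mulrDr mulrCA -!IH sum_binomialS mulr_sumr.
congr (_ + _); apply: eq_bigr => r _.
  by congr (_ * X _ *+ _); rewrite intS; ring.
by rewrite mulrnAr exprS mulrA; congr (_ * X _ *+ _); rewrite !intS; ring.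
Qed.

Lemma solve_second_term (F : fieldType) (u v w x y z : F) :
  w != 0 -> u * x + w * y = v * z -> y = (v * z - u * x) / w.
Proof. by move=> w_neq0 <-; rewrite addrC addKr [w * y]mulrC mulfK. Qed.

Theorem lemma6 (C : numClosedFieldType) (X : int -> C)
  (HX : second_order_rec X) (a b c d e : int) :
  let D  := X (d - a) * X (e - b) - X (e - a) * X (d - b) in
  let D1 := X (d - c) * X (e - b) - X (e - c) * X (d - b) in
  let D2 := X (d - a) * X (e - c) - X (e - a) * X (d - c) in
  D1 != 0 -> D2 != 0 ->
  forall (k : nat) (m : int),
    [/\ \sum_(0 <= r < k.+1) 'C(k, r)%:R * (D1 / D2) ^+ r
          * X (m - (b - c) * k%:Z + (b - a) * r%:Z) = (D / D2) ^+ k * X m,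
        \sum_(0 <= r < k.+1) 'C(k, r)%:R * (- D / D2) ^+ r
          * X (m + (a - b) * k%:Z + (b - c) * r%:Z) = (D1 / - D2) ^+ k * X m
      & \sum_(0 <= r < k.+1) 'C(k, r)%:R * (- D / D1) ^+ r
          * X (m + (b - a) * k%:Z + (a - c) * r%:Z) = (D2 / - D1) ^+ k * X m].
Proof.
move=> D D1 D2 D1_neq0 D2_neq0 k m.
case: HX => p [q [q_neq0 HX]].
have rel n : D1 * X (n - a) + D2 * X (n - b) = D * X (n - c).
  exact: rec_sol_shift_relation q_neq0 HX a b c d e n.
split.
- under eq_bigr do rewrite -mulNr opprB.
  apply: binomial_shift_sum => n.
  by rewrite (solve_second_term D2_neq0 (rel n)); field.
- apply: binomial_shift_sum => n.
  by rewrite (solve_second_term D2_neq0 (rel n)); field.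
- apply: binomial_shift_sum => n.
  have := rel n; rewrite addrC => /(solve_second_term D1_neq0) ->.
  by field.
Qed.
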